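(* Let $\lambda\in\Pi(\mu_1,\ldots,\mu_N)$ and let $\lambda_j=\pi_{\mathcal{P}_j}\#\lambda$ for $j\in\{1,\dots,N\}$. If $\lambda$ is an extreme point of $\Pi(\lambda_{N-1},\mu_N)$ and, for every $j\in\{2,\ldots,N-1\}$, $\lambda_j$ is an extreme point of $\Pi(\lambda_{j-1},\mu_j)$, then $\lambda$ is an extreme point of $\Pi(\mu_1,\ldots,\mu_N)$.
   Context: $N\ge3$; $\mu_k$ are Borel probability measures on complete separable metric spaces $X_k$, $k=1,\dots,N$. $\Pi(\mu_1,\ldots,\mu_N)$ is the convex set of Borel probability measures on $\prod_{k=1}^NX_k$ with $k$-th marginal $\mu_k$. For $j\in\{1,\dots,N\}$, $\pi_{\mathcal{P}_j}:\prod_{k=1}^NX_k\to\prod_{k=1}^jX_k$ is the projection onto the first $j$ coordinates (so $\lambda_1=\mu_1$, $\lambda_N=\lambda$). Writing $\prod_{k=1}^jX_k=Z_j\times X_j$ with $Z_j=\prod_{k=1}^{j-1}X_k$, $\Pi(\lambda_{j-1},\mu_j)$ denotes the set of Borel probability measures on $Z_j\times X_j$ with marginals $\lambda_{j-1}$ on $Z_j$ and $\mu_j$ on $X_j$. An extreme point of a convex set $K$ is a point not expressible as $t\alpha+(1-t)\beta$ with $\alpha\neq\beta$ in $K$, $t\in(0,1)$. *)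

From HB Require Import structures.
From mathcomp Require Import all_boot all_order all_algebra.
From mathcomp Require Import all_classical all_reals all_analysis.
Set Implicit Arguments. Unset Strict Implicit. Unset Printing Implicit Defensive.
Import Order.TTheory GRing.Theory Num.Theory.
Local Open Scope classical_set_scope.
Local Open Scope ring_scope.

(* Polish space: complete (pseudo)metric space that is Hausdorff (so the
   pseudometric is a metric) and separable. *)
Definition separable_space (T : ptopologicalType) : Prop :=
  exists D : set T, countable D /\ closure D = setT.

Definition polish_metric (R : realType) (X : completePseudoMetricType R) : Prop :=
  hausdorff_space X /\ separable_space X.

Notation borel T := (g_sigma_algebraType (@open T)).

(* The product of the first j spaces X 0, ..., X (j-1) (0-based indexing). *)
Definition prodn (T : nat -> ptopologicalType) (j : nat) :=
  forall k : 'I_j, T k.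

Definition prodn_gen (T : nat -> ptopologicalType) (j : nat)
  : set (set (prodn T j)) :=
  fun S => exists k : 'I_j, exists2 A : set (T k),
      (measurable : set (set (borel (T k)))) A &
      S = (fun x : prodn T j => x k) @^-1` A.

Notation Prodn T j := (g_sigma_algebraType (@prodn_gen T j)).

Definition coord (T : nat -> ptopologicalType) (j : nat) (k : 'I_j)
  : Prodn T j -> borel (T k) := fun x => x k.

Definition proj (T : nat -> ptopologicalType) (N j : nat) (h : (j <= N)%N)
  : Prodn T N -> Prodn T j := fun x k => x (widen_ord h k).

(* decomposition Prodn T j.+1 = Prodn T j * T j *)
Definition restr (T : nat -> ptopologicalType) (j : nat)
  : Prodn T j.+1 -> Prodn T j := fun x k => x (widen_ord (leqnSn j) k).
Definition lastc (T : nat -> ptopologicalType) (j : nat)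
  : Prodn T j.+1 -> borel (T j) := fun x => x ord_max.

Lemma proj_measurable (T : nat -> ptopologicalType) (N j : nat) (h : (j <= N)%N) :
  measurable_fun setT (@proj T N j h).
Proof.
apply: (@measurability _ _ (Prodn T N) (Prodn T j) setT (@proj T N j h)
  (@prodn_gen T j)); first by [].
move=> _ [_ [k [A mA ->]] <-].
apply: sub_sigma_algebra; exists (widen_ord h k); exists A => //.
by rewrite setTI.
Qed.

Section marginal.
Context (R : realType) (T : nat -> ptopologicalType) (N j : nat) (h : (j <= N)%N)
  (lam : probability (Prodn T N) R).

Definition marg : set (Prodn T j) -> \bar R := pushforward lam (@proj T N j h).

Local Open Scope ereal_scope.
Let mproj := @proj_measurable T N j h.

Let marg0 : marg set0 = 0.
Proof. by rewrite /marg /pushforward preimage_set0 measure0. Qed.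

Let marg_ge0 A : 0 <= marg A.
Proof. exact: measure_ge0. Qed.

Let marg_sigma_additive : semi_sigma_additive marg.
Proof.
move=> F mF tF mUF; rewrite /marg /pushforward preimage_bigcup.
apply: measure_semi_sigma_additive.
- by move=> n; rewrite -[X in measurable X]setTI; exact: mproj.
- apply/trivIsetP => /= i k _ _ ik; rewrite -preimage_setI.
  by move/trivIsetP : tF => /(_ _ _ _ _ ik) ->//; rewrite preimage_set0.
- by rewrite -preimage_bigcup -[X in measurable X]setTI; exact: mproj.
Qed.

HB.instance Definition _ := isMeasure.Build _ _ _
  marg marg0 marg_ge0 marg_sigma_additive.

Let marg_setT : marg setT = 1.
Proof. by rewrite /marg /pushforward preimage_setT probability_setT. Qed.

HB.instance Definition _ := Measure_isProbability.Build _ _ _ marg marg_setT.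
End marginal.

Local Open Scope ereal_scope.

Definition meq d (T : measurableType d) (R : realType)
  (m1 m2 : set T -> \bar R) : Prop :=
  forall A, measurable A -> m1 A = m2 A.

Definition extreme_point d (T : measurableType d) (R : realType)
  (K : set (probability T R)) (x : probability T R) : Prop :=
  K x /\
  forall (a b : probability T R) (t : R), K a -> K b -> (0 < t < 1)%R ->
    meq x (fun A => t%:E * a A + (1 - t)%:E * b A) -> meq a b.

Definition Pi_multi (R : realType) (T : nat -> ptopologicalType)
  (mu : forall k : nat, probability (borel (T k)) R) (N : nat)
  : set (probability (Prodn T N) R) :=
  fun nu => forall k : 'I_N, meq (pushforward nu (@coord T N k)) (mu k).

Definition Pi_two (R : realType) (T : nat -> ptopologicalType) (j : nat)
  (rho : probability (Prodn T j) R) (m : probability (borel (T j)) R)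
  : set (probability (Prodn T j.+1) R) :=
  fun nu => meq (pushforward nu (@restr T j)) rho /\
            meq (pushforward nu (@lastc T j)) m.

Definition ptop_fam (R : realType) (X : nat -> completePseudoMetricType R)
  : nat -> ptopologicalType := fun k => X k.

From Pilot Require Import Defs.
From HB Require Import structures.
From mathcomp Require Import all_boot all_order all_algebra.
From mathcomp Require Import all_classical all_reals all_analysis.
Set Implicit Arguments. Unset Strict Implicit. Unset Printing Implicit Defensive.
Import Order.TTheory GRing.Theory Num.Theory.
Local Open Scope classical_set_scope.
Local Open Scope ring_scope.

(* Let lam = t a + (1 - t) b with a, b in Pi(mu_1, ..., mu_N)
   and 0 < t < 1.  Marginalisation is affine, so lam_j = t a_j + (1 - t) b_j
   for every prefix marginal.  We show a_j = b_j by induction on j: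
   - j = 1: both are the marginal mu_1, since the measurable sets of a
     one-factor product are cylinders over the single coordinate;
   - j -> j+1: if a_j = b_j then a_j = b_j = lam_j (the mixture of a measure
     with itself is that measure), hence a_{j+1} and b_{j+1} both lie in
     Pi(lam_j, mu_{j+1}); extremality of lam_{j+1} there forces
     a_{j+1} = b_{j+1}.
   The inductive step is the gluing lemma [Pi_two_extreme_glue]; applied
   once more with j + 1 = N (where lam_N = lam) it yields a = b. *)

Section prefix_marginals.
Context (R : realType) (T : nat -> ptopologicalType).
Local Open Scope ereal_scope.

Lemma proj_comp (N k j : nat) (hk : (k <= N)%N) (hj : (j <= k)%N)
    (hjN : (j <= N)%N) (A : set (Prodn T j)) :
  @Defs.proj T N k hk @^-1` (@Defs.proj T k j hj @^-1` A) = @Defs.proj T N j hjN @^-1` A.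
Proof.
apply: funext => x; rewrite /preimage /Defs.proj /=; congr A.
apply: functional_extensionality_dep => -[i hi]; rewrite /widen_ord /=.
have x_irr (p q : (i < N)%N) : x (Ordinal p) = x (Ordinal q).
  by rewrite (bool_irrelevance p q).
exact: x_irr.
Qed.

Lemma marg_comp (N k j : nat) (hk : (k <= N)%N) (hj : (j <= k)%N)
    (hjN : (j <= N)%N) (c : probability (Prodn T N) R) :
  meq (@marg R T k j hj (@marg R T N k hk c)) (@marg R T N j hjN c).
Proof. by move=> A _; exact: (congr1 c (proj_comp hk hj hjN A)). Qed.

Lemma marg_mix (N j : nat) (h : (j <= N)%N) (lam a b : probability (Prodn T N) R)
    (t : R) :
  meq lam (fun A => t%:E * a A + (1 - t)%:E * b A) ->
  meq (@marg R T N j h lam)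
      (fun A => t%:E * @marg R T N j h a A + (1 - t)%:E * @marg R T N j h b A).
Proof.
move=> Hlam A mA; rewrite /marg /pushforward; apply: Hlam.
by rewrite -[X in measurable X]setTI; exact: proj_measurable.
Qed.

Variable mu : forall k : nat, probability (borel (T k)) R.

Lemma Pi_multi_marg (N j : nat) (h : (j <= N)%N) (c : probability (Prodn T N) R) :
  Pi_multi mu c -> Pi_multi mu (@marg R T N j h c).
Proof. by move=> Pc k; exact: Pc (widen_ord h k). Qed.

Lemma Prodn1_measurable (S : set (Prodn T 1)) : measurable S ->
  exists2 A : set (borel (T 0)), measurable A &
    S = (fun x : Prodn T 1 => x ord0) @^-1` A.
Proof.
move=> mS.
have : preimage_set_system setT (fun x : Prodn T 1 => (x ord0 : borel (T 0)))
    measurable S.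
  apply: (smallest_sub _ _ mS).
    exact: sigma_algebra_preimage (sigma_algebra_measurable _).
  move=> _ [[[|//] hk] [A mA ->]]; exists A => //.
  by rewrite setTI (bool_irrelevance hk (ltn0Sn 0)).
by case=> B mB <-; exists B => //; rewrite setTI.
Qed.

(* Hence a coupling on a one-factor product is its own marginal mu_0. *)
Lemma Pi_multi1_unique (c c' : probability (Prodn T 1) R) :
  Pi_multi mu c -> Pi_multi mu c' -> meq c c'.
Proof.
move=> Pc Pc' S mS; have [A mA ->] := Prodn1_measurable mS.
exact: eq_trans (Pc ord0 A mA) (esym (Pc' ord0 A mA)).
Qed.

Lemma Pi_multi_Pi_two (j : nat) (c : probability (Prodn T j.+1) R)
    (rho : probability (Prodn T j) R) :
  Pi_multi mu c -> meq (@marg R T j.+1 j (leqnSn j) c) rho ->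
  Pi_two rho (mu j) c.
Proof. by move=> Pc Hrho; split => //; exact: Pc ord_max. Qed.

End prefix_marginals.

Local Open Scope ereal_scope.

Lemma mix_same (R : realType) (t : R) (x : \bar R) : (0 < t < 1)%R ->
  t%:E * x + (1 - t)%:E * x = x.
Proof.
case/andP => t0 t1.
rewrite -ge0_muleDl ?lee_fin ?subr_ge0 ?(ltW t0) ?(ltW t1) //.
by rewrite -EFinD addrC subrK mul1e.
Qed.

Lemma Pi_two_extreme_glue (R : realType) (T : nat -> ptopologicalType)
    (mu : forall k : nat, probability (borel (T k)) R) (j : nat)
    (rho : probability (Prodn T j) R) (nu a b : probability (Prodn T j.+1) R)
    (t : R) :
  extreme_point (Pi_two rho (mu j)) nu ->
  Pi_multi mu a -> Pi_multi mu b -> (0 < t < 1)%R ->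
  meq nu (fun A => t%:E * a A + (1 - t)%:E * b A) ->
  meq (@marg R T j.+1 j (leqnSn j) a) (@marg R T j.+1 j (leqnSn j) b) ->
  meq a b.
Proof.
move=> [[nu_rho _] ext] Pa Pb t01 Hnu Hab.
have a_rho : meq (@marg R T j.+1 j (leqnSn j) a) rho.
  move=> A mA; have := marg_mix (leqnSn j) Hnu mA.
  by rewrite -(Hab A mA) mix_same // => <-; exact: nu_rho.
apply: (ext _ _ t) => //; apply: Pi_multi_Pi_two => // A mA.
by rewrite -(Hab A mA); exact: a_rho.
Qed.

Theorem mainTheorem3 (R : realType) (X : nat -> completePseudoMetricType R)
  (n : nat) (hn : (2 <= n)%N)
  (hX : forall k : nat, (k < n.+1)%N -> polish_metric (X k))
  (mu : forall k : nat, probability (borel (ptop_fam X k)) R)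
  (lam : probability (Prodn (ptop_fam X) n.+1) R)
  (hlam : @Pi_multi R (ptop_fam X) mu n.+1 lam)
  (hlast : extreme_point
             (@Pi_two R (ptop_fam X) n
                (@marg R (ptop_fam X) n.+1 n (leqnSn n) lam) (mu n)) lam)
  (hmid : forall (j : nat) (hj : (j.+1 <= n)%N), (1 <= j)%N ->
      extreme_point
        (@Pi_two R (ptop_fam X) j
           (@marg R (ptop_fam X) n.+1 j (ltnW (leqW hj)) lam) (mu j))
        (@marg R (ptop_fam X) n.+1 j.+1 (leqW hj) lam)) :
  extreme_point (@Pi_multi R (ptop_fam X) mu n.+1) lam.
Proof.
split => // a b t Pa Pb t01 Hlam.
have agree : forall j, (1 <= j <= n)%N -> forall h : (j <= n.+1)%N,
    meq (@marg R (ptop_fam X) n.+1 j h a) (@marg R (ptop_fam X) n.+1 j h b).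
  elim=> [//|j IH] /andP[_ hj] h.
  have [j0|j_gt0] := posnP j.
    by subst j; apply: Pi_multi1_unique; exact: Pi_multi_marg.
  rewrite (bool_irrelevance h (leqW hj)).
  apply: (Pi_two_extreme_glue (hmid j hj j_gt0)
    (Pi_multi_marg _ Pa) (Pi_multi_marg _ Pb) t01).
  - exact: marg_mix.
  - have hjn : (0 < j <= n)%N by rewrite j_gt0 ltnW.
    move=> A mA; rewrite !(marg_comp (leqW hj) (leqnSn j) (ltnW (leqW hj))) //.
    exact: IH.
apply: (Pi_two_extreme_glue hlast Pa Pb t01 Hlam).
by apply: agree; rewrite (ltnW hn) leqnn.
Qed.
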